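(* $$\sigma(4,3)=120\lambda(7)-96\lambda(2)\lambda(5),\qquad \sigma(3,4)=-80\lambda(7)+8\lambda(3)\lambda(4)+\frac{176}{3}\lambda(2)\lambda(5).$$
   Context: For integers $t\geq 1$, $n\geq 1$ let $S_n^{(t)}=\sum_{k=1}^{n}\frac{1}{(2k-1)^t}$, and for integers $s\geq 2$, $t\geq 1$ let $\sigma(s,t)=\sum_{n\geq 1}\frac{S_n^{(t)}}{n^s}$. For real $s>1$, $\lambda(s)=\sum_{n\geq 1}\frac{1}{(2n-1)^s}$. *)

From Stdlib Require Import Reals.
From Coquelicot Require Import Coquelicot.
Open Scope R_scope.

Definition oddHarm (t n : nat) : R :=
  sum_n_m (fun k => / (2 * INR k - 1) ^ t) 1 n.

(* sigma(s,t) = sum_{n>=1} S_n^{(t)} / n^s  (index shifted: term m is n = m+1) *)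
Definition sigmaST (s t : nat) : R :=
  Series (fun m => oddHarm t (S m) / (INR (S m)) ^ s).

(* lambda(s) = sum_{n>=1} 1/(2n-1)^s, for integer s >= 2 (index shifted) *)
Definition lambdaS (s : nat) : R :=
  Series (fun m => / (2 * INR m + 1) ^ s).

From Stdlib Require Import Reals Lra Lia.
From Coquelicot Require Import Coquelicot.
Open Scope R_scope.

(* Both sums are read off the truncated alternating double sums
   [zeta2 s t i c N] = sum_{0<x<z<=N} s^x t^z / (x^i z^c), s, t = +-1, of weight i + c = 7, at
   N = 2M.  Parity filters turn the partial sums of sigma into a signed combination of the four
   sign patterns, and the distribution relation turns the sum of the four patterns into the
   unsigned double sum truncated at M.  The double sums satisfy two families of linear relations:
   the stuffle relation, from multiplying two truncated single sums (the square x, y <= N), and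
   Tornheim's partial-fraction relation, which holds exactly on the triangle x + y <= N; square
   and triangle differ by a term tending to 0.  Eliminating every double sum leaves single sums,
   products of single sums, these vanishing errors, and the difference between the unsigned
   double sum truncated at M and at 2M, which also tends to 0.  Finally
   sum_{x<=2M} s^x/x^a -> (s + 1/(2^a - 1)) lambda(a), because zeta(a) = 2^a lambda(a)/(2^a - 1). *)

Fixpoint sum_to (f : nat -> R) (n : nat) : R :=
  match n with O => 0 | S k => sum_to f k + f (S k) end.

Lemma sum_to_ext f g n :
  (forall k, (1 <= k <= n)%nat -> f k = g k) -> sum_to f n = sum_to g n.
Proof.
  induction n as [|n IH]; intros H; simpl; [reflexivity|].
  rewrite IH by (intros; apply H; lia). rewrite H by lia. reflexivity.
Qed.

Lemma sum_to_plus f g n : sum_to (fun k => f k + g k) n = sum_to f n + sum_to g n.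
Proof. induction n as [|n IH]; simpl; [ring|]. rewrite IH; ring. Qed.

Lemma sum_to_minus f g n : sum_to (fun k => f k - g k) n = sum_to f n - sum_to g n.
Proof. induction n as [|n IH]; simpl; [ring|]. rewrite IH; ring. Qed.

Lemma sum_to_scal_l c f n : sum_to (fun k => c * f k) n = c * sum_to f n.
Proof. induction n as [|n IH]; simpl; [ring|]. rewrite IH; ring. Qed.

Lemma sum_to_scal_r c f n : sum_to (fun k => f k * c) n = sum_to f n * c.
Proof. induction n as [|n IH]; simpl; [ring|]. rewrite IH; ring. Qed.

Lemma sum_to_zero n : sum_to (fun _ => 0) n = 0.
Proof. induction n as [|n IH]; simpl; [reflexivity|]. rewrite IH; ring. Qed.

Lemma sum_to_swap (F : nat -> nat -> R) m n :
  sum_to (fun i => sum_to (fun j => F i j) n) m = sum_to (fun j => sum_to (fun i => F i j) m) n.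
Proof.
  induction m as [|m IH]; simpl.
  - symmetry. apply sum_to_zero.
  - rewrite IH, <- sum_to_plus. reflexivity.
Qed.

Lemma sum_to_shift h n : sum_to h (S n) = h 1%nat + sum_to (fun k => h (S k)) n.
Proof.
  induction n as [|n IH]; [simpl; ring|].
  change (sum_to h (S (S n))) with (sum_to h (S n) + h (S (S n))).
  rewrite IH. simpl. ring.
Qed.

Lemma sum_to_rev h n : sum_to (fun k => h (S n - k)%nat) n = sum_to h n.
Proof.
  induction n as [|n IH]; [reflexivity|].
  rewrite sum_to_shift. replace (S (S n) - 1)%nat with (S n) by lia.
  simpl (sum_to h (S n)). rewrite <- IH, Rplus_comm. reflexivity.
Qed.

Lemma sum_to_even_odd h M :
  sum_to h (2 * M) = sum_to (fun k => h (2 * k)%nat) M + sum_to (fun k => h (2 * k - 1)%nat) M.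
Proof.
  induction M as [|M IH]; [simpl; ring|].
  replace (2 * S M)%nat with (S (S (2 * M))) by lia. cbn [sum_to]. rewrite IH.
  replace (S (S (2 * M))) with (2 * S M)%nat by lia.
  replace (S (2 * M)) with (2 * S M - 1)%nat by lia. ring.
Qed.

Lemma sum_to_le f g n :
  (forall k, (1 <= k <= n)%nat -> f k <= g k) -> sum_to f n <= sum_to g n.
Proof.
  induction n as [|n IH]; intros H; simpl; [lra|].
  apply Rplus_le_compat; [apply IH; intros; apply H|apply H]; lia.
Qed.

Lemma sum_to_abs f n : Rabs (sum_to f n) <= sum_to (fun k => Rabs (f k)) n.
Proof.
  induction n as [|n IH]; simpl; [rewrite Rabs_R0; lra|].
  eapply Rle_trans; [apply Rabs_triang|]. lra.
Qed.

Lemma sum_n_m_sum_to f n : sum_n_m f 1 n = sum_to f n.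
Proof.
  induction n as [|n IH]; [rewrite sum_n_m_zero by lia; reflexivity|].
  rewrite sum_n_Sm, IH by lia. reflexivity.
Qed.

Lemma sum_n_sum_to g n : sum_n g n = sum_to (fun k => g (k - 1)%nat) (S n).
Proof.
  induction n as [|n IH].
  - unfold sum_n. rewrite sum_n_n. simpl. symmetry. apply Rplus_0_l.
  - unfold sum_n in *. rewrite sum_n_Sm, IH by lia. simpl.
    replace (n - 0)%nat with n by lia. reflexivity.
Qed.

Lemma sum_to_mul f g N :
  sum_to f N * sum_to g N = sum_to (fun z => g z * sum_to f (pred z)) N
    + sum_to (fun z => f z * sum_to g (pred z)) N + sum_to (fun z => f z * g z) N.
Proof.
  induction N as [|N IH]; [simpl; ring|]. cbn [sum_to pred].
  rewrite Rmult_plus_distr_r, !Rmult_plus_distr_l, IH. ring.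
Qed.

Lemma sum_to_inv_sq_le N : sum_to (fun k => / INR k ^ 2) N <= 2 - 2 / (INR N + 1).
Proof.
  induction N as [|N IH]; [simpl; lra|].
  cbn [sum_to]. rewrite S_INR. pose proof (pos_INR N) as HN. set (x := INR N) in *.
  assert (0 <= 2 / (x + 1) - 2 / (x + 1 + 1) - / (x + 1) ^ 2); [|lra].
  replace (2 / (x + 1) - 2 / (x + 1 + 1) - / (x + 1) ^ 2)
    with (x / ((x + 1) ^ 2 * (x + 1 + 1))) by (field; lra).
  apply Rmult_le_pos; [lra|]. left. apply Rinv_0_lt_compat, Rmult_lt_0_compat; [apply pow_lt|]; lra.
Qed.

Lemma sum_to_inv_sq_le_2 N : sum_to (fun k => / INR k ^ 2) N <= 2.
Proof.
  pose proof (sum_to_inv_sq_le N). pose proof (pos_INR N).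
  assert (0 <= 2 / (INR N + 1)) by (apply Rdiv_le_0_compat; lra). lra.
Qed.

Lemma sum_to_cvg_of_inv_sq_bound f C :
  (forall k, (1 <= k)%nat -> 0 <= f k <= C / INR k ^ 2) -> exists l : R, is_lim_seq (sum_to f) l.
Proof.
  intros Hf.
  assert (HC : 0 <= C) by (pose proof (Hf 1%nat (le_n 1)) as H1; simpl in H1; lra).
  apply (ex_finite_lim_seq_incr _ (C * 2)).
  - intros n. simpl. pose proof (Hf (S n) ltac:(lia)). lra.
  - intros n. eapply Rle_trans.
    + apply (sum_to_le _ (fun k => C * / INR k ^ 2)). intros k Hk. apply Hf. lia.
    + rewrite sum_to_scal_l. apply Rmult_le_compat_l; [lra|apply sum_to_inv_sq_le_2].
Qed.

Lemma pow_sign_even s k : s * s = 1 -> s ^ (2 * k) = 1.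
Proof. intros Hs. rewrite pow_mult. replace (s ^ 2) with 1 by (simpl; nra). apply pow1. Qed.

Lemma pow_sign_odd s k : s * s = 1 -> (1 <= k)%nat -> s ^ (2 * k - 1) = s.
Proof.
  intros Hs Hk. replace (2 * k - 1)%nat with (S (2 * (k - 1))) by lia.
  rewrite <- tech_pow_Rmult, pow_sign_even by assumption. ring.
Qed.

Lemma pow_sign_split s t z x :
  s * s = 1 -> t * t = 1 -> (x <= z)%nat -> t ^ z * (s * t) ^ x = s ^ x * t ^ (z - x).
Proof.
  intros Hs Ht Hx. replace z with ((z - x) + x)%nat at 1 by lia.
  rewrite pow_add, Rpow_mult_distr, <- (Rmult_1_r (s ^ x * t ^ (z - x))), <- (pow1 x), <- Ht.
  rewrite Rpow_mult_distr.
  ring.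
Qed.

Lemma INR_double k : INR (2 * k) = 2 * INR k.
Proof. rewrite mult_INR. reflexivity. Qed.

Lemma INR_ge_1 k : (1 <= k)%nat -> 1 <= INR k.
Proof. intros H. apply (le_INR 1 k) in H. exact H. Qed.

Lemma inv_pow_le x a b : 1 <= x -> (a <= b)%nat -> / x ^ b <= / x ^ a.
Proof. intros Hx Hab. apply Rinv_le_contravar; [apply pow_lt; lra|apply Rle_pow; assumption]. Qed.

Definition zterm (s : R) (a x : nat) : R := s ^ x / INR x ^ a.
Definition zeta1 (s : R) (a N : nat) : R := sum_to (zterm s a) N.
Definition zeta2 (s t : R) (i c N : nat) : R :=
  sum_to (fun z => zterm t c z * zeta1 s i (pred z)) N.
Definition triangle (f g : nat -> R) (N : nat) : R :=
  sum_to (fun z => sum_to (fun x => f x * g (z - x)%nat) (pred z)) N.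
Definition tornheim (s : R) (a : nat) (t : R) (b N : nat) : R := triangle (zterm s a) (zterm t b) N.
Definition square_gap (s : R) (a : nat) (t : R) (b N : nat) : R :=
  zeta1 s a N * zeta1 t b N - tornheim s a t b N.

Lemma zeta1_mul s a t b N :
  zeta1 s a N * zeta1 t b N = zeta2 s t a b N + zeta2 t s b a N + zeta1 (s * t) (a + b) N.
Proof.
  unfold zeta1, zeta2. rewrite sum_to_mul. f_equal.
  apply sum_to_ext. intros k Hk. unfold zterm.
  assert (INR k <> 0) by (apply not_0_INR; lia).
  rewrite Rpow_mult_distr, pow_add. field. split; apply pow_nonzero; assumption.
Qed.

Lemma triangle_by_rows f g N : triangle f g N = sum_to (fun y => g y * sum_to f (N - y)%nat) N.
Proof.
  unfold triangle. induction N as [|N IH]; [reflexivity|].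
  cbn [sum_to pred]. rewrite IH. replace (S N - S N)%nat with O by lia. cbn [sum_to].
  rewrite (sum_to_ext (fun y => g y * sum_to f (S N - y))
             (fun y => g y * sum_to f (N - y) + g y * f (S N - y)%nat)).
  2:{ intros k Hk. replace (S N - k)%nat with (S (N - k)) by lia. simpl. ring. }
  rewrite sum_to_plus, <- (sum_to_rev (fun y => g y * f (S N - y)%nat) N).
  rewrite (sum_to_ext (fun x => f x * g (S N - x)%nat)
                      (fun k => g (S N - k)%nat * f (S N - (S N - k))%nat)).
  - ring.
  - intros k Hk. replace (S N - (S N - k))%nat with k by lia. ring.
Qed.

Lemma triangle_comm f g N : triangle f g N = triangle g f N.
Proof.
  unfold triangle. apply sum_to_ext. intros z Hz. destruct z as [|n]; [lia|]. simpl pred.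
  rewrite <- (sum_to_rev (fun x => g x * f (S n - x)%nat) n).
  apply sum_to_ext. intros k Hk. replace (S n - (S n - k))%nat with k by lia. ring.
Qed.

Section PartialFractions.

Variables (a b w : nat) (al be : nat -> R).

Hypothesis partial_fractions :
  forall x y : R, 0 < x -> 0 < y ->
    / (x ^ a * y ^ b) = sum_to (fun j => al j / (x ^ j * (x + y) ^ (w - j))
                                        + be j / (y ^ j * (x + y) ^ (w - j))) (pred w).

Lemma zterm_mul_partial_fractions s t x z :
  s * s = 1 -> t * t = 1 -> (1 <= x < z)%nat ->
  zterm s a x * zterm t b (z - x) =
  sum_to (fun j => al j * zterm t (w - j) z * zterm (s * t) j x
                 + be j * zterm s (w - j) z * zterm (s * t) j (z - x)) (pred w).
Proof.
  intros Hs Ht Hx.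
  assert (HX : 0 < INR x) by (apply lt_0_INR; lia).
  assert (HY : 0 < INR (z - x)) by (apply lt_0_INR; lia).
  assert (HZ : INR z = INR x + INR (z - x)) by (rewrite minus_INR by lia; ring).
  assert (Hsx : s ^ x * t ^ (z - x) = t ^ z * (s * t) ^ x)
    by (symmetry; apply pow_sign_split; (assumption || lia)).
  assert (Hsy : s ^ x * t ^ (z - x) = s ^ z * (s * t) ^ (z - x)).
  { rewrite (Rmult_comm s t), pow_sign_split by (assumption || lia).
    replace (z - (z - x))%nat with x by lia. ring. }
  transitivity (s ^ x * t ^ (z - x) * / (INR x ^ a * INR (z - x) ^ b)).
  { unfold zterm. field. split; apply pow_nonzero; lra. }
  rewrite partial_fractions, <- sum_to_scal_l by assumption.
  apply sum_to_ext. intros j _. unfold zterm. rewrite HZ, Rmult_plus_distr_l.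
  rewrite Hsx at 1. rewrite Hsy. field. repeat split; apply pow_nonzero; lra.
Qed.

Lemma tornheim_partial_fractions s t N :
  s * s = 1 -> t * t = 1 ->
  tornheim s a t b N =
  sum_to (fun j => al j * zeta2 (s * t) t j (w - j) N
                 + be j * zeta2 (s * t) s j (w - j) N) (pred w).
Proof.
  intros Hs Ht.
  transitivity (sum_to (fun z => sum_to (fun j =>
      al j * (zterm t (w - j) z * zeta1 (s * t) j (pred z))
    + be j * (zterm s (w - j) z * zeta1 (s * t) j (pred z))) (pred w)) N).
  2:{ rewrite sum_to_swap. apply sum_to_ext. intros j _.
      rewrite sum_to_plus, !sum_to_scal_l. reflexivity. }
  unfold tornheim, triangle. apply sum_to_ext. intros z Hz. destruct z as [|n]; [lia|]. cbn [pred].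
  rewrite (sum_to_ext _ _ n (fun x Hx => zterm_mul_partial_fractions s t x (S n) Hs Ht ltac:(lia))).
  rewrite sum_to_swap. apply sum_to_ext. intros j _.
  rewrite sum_to_plus, (sum_to_rev (fun y => be j * zterm s (w - j) (S n) * zterm (s * t) j y)).
  unfold zeta1. rewrite !sum_to_scal_l. ring.
Qed.

End PartialFractions.

Fixpoint binom (n k : nat) : nat :=
  match n, k with
  | _, O => 1%nat
  | O, S _ => 0%nat
  | S n', S k' => (binom n' k' + binom n' k)%nat
  end.

(* Euler's partial fractions: 1/(x^a y^b) = sum_{j<=a} C(a+b-j-1, b-1) / (x^j (x+y)^(a+b-j))
   + sum_{j<=b} C(a+b-j-1, a-1) / (y^j (x+y)^(a+b-j)). *)
Definition tornheim_coef (a b j : nat) : R :=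
  if (j <=? a)%nat then INR (binom (a + b - j - 1) (b - 1)) else 0.

Lemma partial_fractions_weight7 a b (x y : R) :
  (a + b = 7)%nat -> (1 <= a)%nat -> (1 <= b)%nat -> 0 < x -> 0 < y ->
  / (x ^ a * y ^ b) = sum_to (fun j => tornheim_coef a b j / (x ^ j * (x + y) ^ (7 - j))
                                     + tornheim_coef b a j / (y ^ j * (x + y) ^ (7 - j))) 6.
Proof.
  intros Hab Ha Hb Hx Hy. replace b with (7 - a)%nat by lia.
  destruct a as [|[|[|[|[|[|[|a]]]]]]]; try lia; cbn; field; lra.
Qed.

Lemma tornheim_weight7 s t a b N :
  s * s = 1 -> t * t = 1 -> (a + b = 7)%nat -> (1 <= a)%nat -> (1 <= b)%nat ->
  tornheim s a t b N = sum_to (fun j => tornheim_coef a b j * zeta2 (s * t) t j (7 - j) N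
                                     + tornheim_coef b a j * zeta2 (s * t) s j (7 - j) N) 6.
Proof.
  intros Hs Ht Hab Ha Hb. apply tornheim_partial_fractions; [|assumption..].
  intros x y Hx Hy. apply partial_fractions_weight7; assumption.
Qed.

Lemma oddHarm_sum_to a n : oddHarm a n = sum_to (fun k => / (2 * INR k - 1) ^ a) n.
Proof. apply sum_n_m_sum_to. Qed.

Lemma zeta1_double s a M :
  s * s = 1 -> zeta1 s a (2 * M) = s * oddHarm a M + / 2 ^ a * zeta1 1 a M.
Proof.
  intros Hs. unfold zeta1. rewrite sum_to_even_odd, oddHarm_sum_to, Rplus_comm.
  rewrite <- !sum_to_scal_l. f_equal; apply sum_to_ext; intros k Hk; unfold zterm.
  - rewrite pow_sign_odd, minus_INR, INR_double by (assumption || lia).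
    simpl INR. unfold Rdiv. ring.
  - assert (INR k <> 0) by (apply not_0_INR; lia).
    rewrite pow_sign_even, pow1, INR_double, Rpow_mult_distr by assumption.
    field. repeat split; apply pow_nonzero; lra.
Qed.

Lemma zeta1_double_pred s a k :
  s * s = 1 -> (1 <= k)%nat ->
  zeta1 s a (pred (2 * k)) = s * oddHarm a k + / 2 ^ a * zeta1 1 a (pred k).
Proof.
  intros Hs Hk.
  assert (Hsucc : forall u n, (1 <= n)%nat -> zeta1 u a n = zeta1 u a (pred n) + zterm u a n).
  { intros u n Hn. destruct n; [lia|]. reflexivity. }
  apply (Rplus_eq_reg_r (zterm s a (2 * k))). rewrite <- Hsucc by lia.
  rewrite zeta1_double, (Hsucc 1 k) by assumption. unfold zterm.
  assert (INR k <> 0) by (apply not_0_INR; lia).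
  rewrite pow_sign_even, pow1, INR_double, Rpow_mult_distr by assumption.
  field. repeat split; apply pow_nonzero; lra.
Qed.

Lemma zeta2_even_outer s i c M :
  s * s = 1 ->
  zeta2 s 1 i c (2 * M) + zeta2 s (-1) i c (2 * M)
  = 2 / 2 ^ c * sum_to (fun k => (s * oddHarm i k + / 2 ^ i * zeta1 1 i (pred k)) / INR k ^ c) M.
Proof.
  intros Hs. unfold zeta2. rewrite <- sum_to_plus, sum_to_even_odd.
  lazymatch goal with |- sum_to _ M + sum_to ?odd M = _ =>
    rewrite (sum_to_ext odd (fun _ => 0)), sum_to_zero, Rplus_0_r end.
  - rewrite <- sum_to_scal_l. apply sum_to_ext. intros k Hk. unfold zterm.
    assert (INR k <> 0) by (apply not_0_INR; lia).
    rewrite zeta1_double_pred, pow1, pow_sign_even, INR_double, Rpow_mult_distr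
      by (assumption || ring || lia).
    field. repeat split; apply pow_nonzero; lra.
  - intros k Hk. unfold zterm. rewrite pow1, pow_sign_odd by (ring || lia). unfold Rdiv. ring.
Qed.

Lemma odd_harmonic_partial_sum i c M :
  sum_to (fun k => oddHarm i k / INR k ^ c) M =
  2 ^ c / 4 * (zeta2 1 1 i c (2 * M) + zeta2 1 (-1) i c (2 * M)
               - zeta2 (-1) 1 i c (2 * M) - zeta2 (-1) (-1) i c (2 * M)).
Proof.
  replace (zeta2 1 1 i c (2 * M) + zeta2 1 (-1) i c (2 * M) - zeta2 (-1) 1 i c (2 * M)
           - zeta2 (-1) (-1) i c (2 * M))
    with ((zeta2 1 1 i c (2 * M) + zeta2 1 (-1) i c (2 * M))
          - (zeta2 (-1) 1 i c (2 * M) + zeta2 (-1) (-1) i c (2 * M))) by ring.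
  rewrite !zeta2_even_outer by ring.
  rewrite <- Rmult_minus_distr_l, <- sum_to_minus, <- !sum_to_scal_l.
  apply sum_to_ext. intros k Hk. assert (INR k <> 0) by (apply not_0_INR; lia).
  field. repeat split; apply pow_nonzero; lra.
Qed.

Lemma zeta2_distribution i c M :
  zeta2 1 1 i c (2 * M) + zeta2 1 (-1) i c (2 * M) + zeta2 (-1) 1 i c (2 * M)
  + zeta2 (-1) (-1) i c (2 * M) = 4 / 2 ^ (i + c) * zeta2 1 1 i c M.
Proof.
  rewrite Rplus_assoc, !zeta2_even_outer by ring.
  rewrite <- Rmult_plus_distr_l, <- sum_to_plus.
  unfold zeta2. rewrite <- !sum_to_scal_l. apply sum_to_ext. intros k Hk. unfold zterm.
  assert (INR k <> 0) by (apply not_0_INR; lia).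
  rewrite pow1, pow_add. field. repeat split; apply pow_nonzero; lra.
Qed.

Lemma is_lim_seq_scal (u : nat -> R) (c l : R) :
  is_lim_seq u l -> is_lim_seq (fun n => c * u n) (c * l).
Proof. intros H. apply (is_lim_seq_mult' (fun _ => c) u c l); [apply is_lim_seq_const|exact H]. Qed.

Lemma is_lim_seq_double (u : nat -> R) (l : Rbar) :
  is_lim_seq u l -> is_lim_seq (fun M => u (2 * M)%nat) l.
Proof.
  apply is_lim_seq_subseq. intros P [N HN]. exists N. intros n Hn. apply HN. lia.
Qed.

Lemma is_lim_seq_eq_value (u : nat -> R) (l l' : R) : is_lim_seq u l -> l = l' -> is_lim_seq u l'.
Proof. intros H <-. exact H. Qed.

Lemma zeta1_one_bounds a n : (2 <= a)%nat -> 0 <= zeta1 1 a n <= 2.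
Proof.
  intros Ha. unfold zeta1. split.
  - rewrite <- (sum_to_zero n). apply sum_to_le. intros k Hk. unfold zterm.
    rewrite pow1. apply Rdiv_le_0_compat; [lra|apply pow_lt, lt_0_INR; lia].
  - eapply Rle_trans; [|apply (sum_to_inv_sq_le_2 n)]. apply sum_to_le. intros k Hk.
    unfold zterm. rewrite pow1. unfold Rdiv. rewrite Rmult_1_l.
    apply inv_pow_le; [apply INR_ge_1|]; lia.
Qed.

Lemma oddHarm_lim a : (2 <= a)%nat -> is_lim_seq (oddHarm a) (lambdaS a).
Proof.
  intros Ha.
  assert (Hterm : forall k, (1 <= k)%nat -> 0 <= / (2 * INR k - 1) ^ a <= 1 / INR k ^ 2).
  { intros k Hk. pose proof (INR_ge_1 k Hk). split.
    - left. apply Rinv_0_lt_compat, pow_lt. lra.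
    - unfold Rdiv. rewrite Rmult_1_l. eapply Rle_trans; [|apply inv_pow_le; eassumption].
      apply Rinv_le_contravar; [apply pow_lt; lra|]. apply pow_incr. lra. }
  destruct (sum_to_cvg_of_inv_sq_bound _ 1 Hterm) as [l Hl].
  assert (Hs : is_lim_seq (sum_n (fun m => / (2 * INR m + 1) ^ a)) l).
  { apply is_lim_seq_incr_1 in Hl. eapply is_lim_seq_ext; [|exact Hl].
    intros n. rewrite sum_n_sum_to. apply sum_to_ext. intros k Hk.
    rewrite minus_INR by lia. simpl INR. f_equal. f_equal. ring. }
  unfold lambdaS. rewrite (is_series_unique _ _ Hs : Series _ = l).
  eapply is_lim_seq_ext; [|exact Hl]. intros n. symmetry. apply oddHarm_sum_to.
Qed.

Lemma lim_zeta1_double s a :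
  s * s = 1 -> (2 <= a)%nat ->
  is_lim_seq (fun M => zeta1 s a (2 * M)) ((s + / (2 ^ a - 1)) * lambdaS a).
Proof.
  intros Hs Ha.
  assert (Hlim : forall u (Z : R), u * u = 1 -> is_lim_seq (zeta1 1 a) Z ->
            is_lim_seq (fun M => zeta1 u a (2 * M)) (u * lambdaS a + / 2 ^ a * Z)).
  { intros u Z Hu HZ. eapply is_lim_seq_ext.
    - intros M. symmetry. apply zeta1_double, Hu.
    - apply is_lim_seq_plus'; apply is_lim_seq_scal; [apply oddHarm_lim, Ha|exact HZ]. }
  destruct (sum_to_cvg_of_inv_sq_bound (zterm 1 a) 1) as [Z HZ].
  { intros k Hk. pose proof (INR_ge_1 k Hk). unfold zterm. rewrite pow1. split.
    - apply Rdiv_le_0_compat; [lra|apply pow_lt; lra].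
    - apply Rmult_le_compat_l; [lra|apply inv_pow_le; assumption]. }
  change (is_lim_seq (zeta1 1 a) Z) in HZ.
  assert (Hfix : Z = lambdaS a + / 2 ^ a * Z).
  { pose proof (is_lim_seq_double _ _ HZ) as H1. pose proof (Hlim 1 Z ltac:(ring) HZ) as H2.
    apply is_lim_seq_unique in H1, H2. rewrite H1 in H2. injection H2 as H2. lra. }
  assert (H2a : 1 < 2 ^ a) by (apply Rlt_pow_R1; [lra|lia]).
  replace ((s + / (2 ^ a - 1)) * lambdaS a) with (s * lambdaS a + / 2 ^ a * Z).
  - apply Hlim; assumption.
  - set (p := 2 ^ a) in *. apply (Rmult_eq_reg_r (p * (p - 1))); [|nra].
    transitivity (s * lambdaS a * p * (p - 1) + (Z * p - Z)); [field; lra|].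
    replace (Z * p - Z) with (lambdaS a * p) by (rewrite Hfix at 1; field; lra).
    field. lra.
Qed.

Lemma sum_to_tail_bound (f : nat -> R) m y :
  (forall x, (1 <= x)%nat -> Rabs (f x) <= / INR x) ->
  Rabs (sum_to f (m + y) - sum_to f m) <= INR y / (INR m + 1).
Proof.
  intros Hf. pose proof (pos_INR m) as Hm. induction y as [|y IH].
  - rewrite Nat.add_0_r, Rminus_diag_eq, Rabs_R0 by reflexivity. simpl. lra.
  - rewrite Nat.add_succ_r. cbn [sum_to].
    replace (sum_to f (m + y) + f (S (m + y)) - sum_to f m)
      with ((sum_to f (m + y) - sum_to f m) + f (S (m + y))) by ring.
    eapply Rle_trans; [apply Rabs_triang|].
    pose proof (Hf (S (m + y)) ltac:(lia)) as H1.
    assert (H2 : / INR (S (m + y)) <= / (INR m + 1)).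
    { apply Rinv_le_contravar; [lra|]. rewrite S_INR, plus_INR. pose proof (pos_INR y). lra. }
    rewrite S_INR. replace ((INR y + 1) / (INR m + 1)) with (INR y / (INR m + 1) + / (INR m + 1))
      by (field; lra).
    lra.
Qed.

Lemma square_minus_triangle_bound (f g : nat -> R) N :
  (forall x, (1 <= x)%nat -> Rabs (f x) <= / INR x) ->
  (forall y, (1 <= y)%nat -> Rabs (g y) <= / INR y ^ 4) -> (1 <= N)%nat ->
  Rabs (sum_to f N * sum_to g N - triangle f g N) <= 2 / INR N.
Proof.
  intros Hf Hg HN. rewrite triangle_by_rows, Rmult_comm, <- sum_to_scal_r, <- sum_to_minus.
  eapply Rle_trans; [apply sum_to_abs|].
  assert (HNpos : 0 < INR N) by (apply lt_0_INR; lia).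
  eapply Rle_trans.
  - apply (sum_to_le _ (fun y => / INR N * / INR y ^ 2)). intros y Hy.
    rewrite <- Rmult_minus_distr_l, Rabs_mult.
    pose proof (sum_to_tail_bound f (N - y) y Hf) as Htail.
    replace (N - y + y)%nat with N in Htail by lia. rewrite minus_INR in Htail by lia.
    pose proof (INR_ge_1 y ltac:(lia)) as Hy1. assert (INR y <= INR N) by (apply le_INR; lia).
    set (Y := INR y) in *. set (X := INR N) in *.
    apply (Rle_trans _ (/ Y ^ 4 * (Y / (X - Y + 1)))).
    { apply Rmult_le_compat; try apply Rabs_pos; [apply Hg; lia|exact Htail]. }
    replace (/ Y ^ 4 * (Y / (X - Y + 1))) with (/ (Y ^ 3 * (X - Y + 1))) by (field; split; lra).
    rewrite <- Rinv_mult. apply Rinv_le_contravar; [apply Rmult_lt_0_compat; [|apply pow_lt]; lra|].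
    assert (0 <= Y ^ 2 * ((Y - 1) * (X - Y)))
      by (apply Rmult_le_pos; [apply pow_le; lra|apply Rmult_le_pos; lra]).
    nra.
  - rewrite sum_to_scal_l. pose proof (sum_to_inv_sq_le_2 N). unfold Rdiv. rewrite Rmult_comm.
    apply Rmult_le_compat_r; [left; apply Rinv_0_lt_compat|]; assumption.
Qed.

Lemma square_minus_triangle_lim (f g : nat -> R) :
  (forall x, (1 <= x)%nat -> Rabs (f x) <= / INR x) ->
  (forall y, (1 <= y)%nat -> Rabs (g y) <= / INR y ^ 4) ->
  is_lim_seq (fun N => sum_to f N * sum_to g N - triangle f g N) 0.
Proof.
  intros Hf Hg. apply is_lim_seq_incr_1.
  assert (Hinv : is_lim_seq (fun n => / INR (S n)) 0).
  { apply (is_lim_seq_incr_1 (fun n => / INR n) 0).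
    replace (Finite 0) with (Rbar_inv p_infty) by reflexivity.
    apply is_lim_seq_inv; [apply is_lim_seq_INR|discriminate]. }
  apply (is_lim_seq_le_le (fun n => -2 * / INR (S n)) _ (fun n => 2 * / INR (S n))).
  - intros n. pose proof (square_minus_triangle_bound f g (S n) Hf Hg ltac:(lia)) as H.
    unfold Rdiv in H. apply Rabs_le_between' in H. lra.
  - replace (Finite 0) with (Finite (-2 * 0)) by (f_equal; ring). apply is_lim_seq_scal, Hinv.
  - replace (Finite 0) with (Finite (2 * 0)) by (f_equal; ring). apply is_lim_seq_scal, Hinv.
Qed.

Lemma zterm_abs_le s a k x :
  s * s = 1 -> (k <= a)%nat -> (1 <= x)%nat -> Rabs (zterm s a x) <= / INR x ^ k.
Proof.
  intros Hs Hk Hx. pose proof (INR_ge_1 x Hx).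
  assert (Habs : Rabs s = 1).
  { destruct (Rle_lt_dec 0 s); [rewrite Rabs_pos_eq|rewrite Rabs_left]; nra. }
  unfold zterm, Rdiv. rewrite Rabs_mult, <- RPow_abs, Habs, pow1, Rmult_1_l.
  rewrite Rabs_pos_eq; [apply inv_pow_le; assumption|].
  left. apply Rinv_0_lt_compat, pow_lt. lra.
Qed.

Lemma lim_square_gap s a t b :
  s * s = 1 -> t * t = 1 -> (1 <= a)%nat -> (1 <= b)%nat -> (4 <= a \/ 4 <= b)%nat ->
  is_lim_seq (fun M => square_gap s a t b (2 * M)) 0.
Proof.
  intros Hs Ht Ha Hb Hab. apply is_lim_seq_double.
  assert (Hone : forall u c x, u * u = 1 -> (1 <= c)%nat -> (1 <= x)%nat ->
            Rabs (zterm u c x) <= / INR x).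
  { intros u c x Hu Hc Hx. rewrite <- (pow_1 (INR x)). apply zterm_abs_le; assumption. }
  unfold square_gap, tornheim, zeta1. destruct Hab as [Ha4|Hb4].
  - apply (is_lim_seq_ext (fun N => sum_to (zterm t b) N * sum_to (zterm s a) N
                                     - triangle (zterm t b) (zterm s a) N)).
    { intros N. rewrite triangle_comm. ring. }
    apply square_minus_triangle_lim; intros x Hx; [apply Hone|apply zterm_abs_le]; assumption.
  - apply square_minus_triangle_lim; intros x Hx; [apply Hone|apply zterm_abs_le]; assumption.
Qed.

Lemma lim_zeta2_doubling i c :
  (2 <= i)%nat -> (2 <= c)%nat -> is_lim_seq (fun M => zeta2 1 1 i c M - zeta2 1 1 i c (2 * M)) 0.
Proof.
  intros Hi Hc.
  destruct (sum_to_cvg_of_inv_sq_bound (fun z => zterm 1 c z * zeta1 1 i (pred z)) 2) as [l Hl].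
  { intros z Hz. pose proof (INR_ge_1 z Hz). pose proof (zeta1_one_bounds i (pred z) Hi).
    assert (0 <= zterm 1 c z <= / INR z ^ 2).
    { unfold zterm. rewrite pow1. unfold Rdiv. rewrite Rmult_1_l. split.
      - left. apply Rinv_0_lt_compat, pow_lt. lra.
      - apply inv_pow_le; assumption. }
    split; [apply Rmult_le_pos|unfold Rdiv; rewrite Rmult_comm; apply Rmult_le_compat]; lra. }
  replace (Finite 0) with (Finite (l - l)) by (f_equal; ring).
  apply is_lim_seq_minus'; [|apply is_lim_seq_double]; exact Hl.
Qed.

Lemma sigmaST_of_lim c i (L : R) :
  is_lim_seq (sum_to (fun k => oddHarm i k / INR k ^ c)) L -> sigmaST c i = L.
Proof.
  intros H. unfold sigmaST. apply is_series_unique.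
  change (is_lim_seq (sum_n (fun m => oddHarm i (S m) / INR (S m) ^ c)) L).
  apply is_lim_seq_incr_1 in H. eapply is_lim_seq_ext; [|exact H].
  intros n. rewrite sum_n_sum_to. apply sum_to_ext. intros k Hk.
  replace (S (k - 1)) with k by lia. reflexivity.
Qed.

Ltac double_shuffle_relation s t u a b N :=
  let Hst := fresh "Hstuffle" in
  let Hsh := fresh "Hshuffle" in
  pose proof (zeta1_mul s a t b N) as Hst;
  pose proof (tornheim_weight7 s t a b N ltac:(ring) ltac:(ring) eq_refl ltac:(lia) ltac:(lia))
    as Hsh;
  cbn [sum_to tornheim_coef binom Nat.leb Nat.add Nat.sub INR] in Hst, Hsh;
  replace (s * t) with u in Hst, Hsh by ring.

Ltac weight7_relations N :=
  double_shuffle_relation (-1) 1 (-1) 1%nat 6%nat N;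
  double_shuffle_relation (-1) 1 (-1) 2%nat 5%nat N;
  double_shuffle_relation (-1) 1 (-1) 3%nat 4%nat N;
  double_shuffle_relation (-1) 1 (-1) 4%nat 3%nat N;
  double_shuffle_relation (-1) 1 (-1) 5%nat 2%nat N;
  double_shuffle_relation (-1) 1 (-1) 6%nat 1%nat N;
  double_shuffle_relation (-1) (-1) 1 4%nat 3%nat N;
  double_shuffle_relation (-1) (-1) 1 5%nat 2%nat N;
  double_shuffle_relation (-1) (-1) 1 6%nat 1%nat N.

(* The coefficients are obtained by eliminating all double sums from [odd_harmonic_partial_sum],
   [zeta2_distribution] and the relations of [weight7_relations]. *)
Definition sigma43_approx (M : nat) : R :=
  (1032 * (zeta1 (-1) 2 (2 * M) * zeta1 1 5 (2 * M))
   + 2520 * (zeta1 (-1) 5 (2 * M) * zeta1 1 2 (2 * M))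
   + 1528 * (zeta1 (-1) 5 (2 * M) * zeta1 (-1) 2 (2 * M))
   - 6212 * zeta1 (-1) 7 (2 * M) - 2424 * zeta1 1 7 (2 * M)
   + 1280 * square_gap (-1) 1 1 6 (2 * M) - 516 * square_gap (-1) 2 1 5 (2 * M)
   + 132 * square_gap (-1) 3 1 4 (2 * M) + 504 * square_gap (-1) 4 1 3 (2 * M)
   - 1260 * square_gap (-1) 5 1 2 (2 * M) + 2520 * square_gap (-1) 6 1 1 (2 * M)
   + 380 * square_gap (-1) 4 (-1) 3 (2 * M) - 764 * square_gap (-1) 5 (-1) 2 (2 * M)
   + 1280 * square_gap (-1) 6 (-1) 1 (2 * M)
   + 4 * (zeta2 1 1 3 4 M - zeta2 1 1 3 4 (2 * M))) / 31.

Definition sigma34_approx (M : nat) : R :=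
  (3544 * zeta1 (-1) 7 (2 * M) + 1028 * zeta1 1 7 (2 * M)
   - 764 * (zeta1 (-1) 2 (2 * M) * zeta1 1 5 (2 * M))
   - 126 * (zeta1 (-1) 3 (2 * M) * zeta1 1 4 (2 * M))
   - 126 * (zeta1 (-1) 4 (2 * M) * zeta1 1 3 (2 * M))
   - 1260 * (zeta1 (-1) 5 (2 * M) * zeta1 1 2 (2 * M))
   - 2 * (zeta1 (-1) 4 (2 * M) * zeta1 (-1) 3 (2 * M))
   - 516 * (zeta1 (-1) 5 (2 * M) * zeta1 (-1) 2 (2 * M))
   - 640 * square_gap (-1) 1 1 6 (2 * M) + 382 * square_gap (-1) 2 1 5 (2 * M)
   - 128 * square_gap (-1) 3 1 4 (2 * M) - 252 * square_gap (-1) 4 1 3 (2 * M)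
   + 630 * square_gap (-1) 5 1 2 (2 * M) - 1260 * square_gap (-1) 6 1 1 (2 * M)
   - 128 * square_gap (-1) 4 (-1) 3 (2 * M) + 258 * square_gap (-1) 5 (-1) 2 (2 * M)
   - 640 * square_gap (-1) 6 (-1) 1 (2 * M)
   + 2 * (zeta2 1 1 4 3 M - zeta2 1 1 4 3 (2 * M))) / 31.

Lemma sigma43_partial_sum M : sum_to (fun k => oddHarm 3 k / INR k ^ 4) M = sigma43_approx M.
Proof.
  pose proof (odd_harmonic_partial_sum 3 4 M). pose proof (zeta2_distribution 3 4 M).
  cbn [pow Nat.add] in *. weight7_relations (2 * M)%nat.
  unfold sigma43_approx, square_gap. lra.
Qed.

Lemma sigma34_partial_sum M : sum_to (fun k => oddHarm 4 k / INR k ^ 3) M = sigma34_approx M.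
Proof.
  pose proof (odd_harmonic_partial_sum 4 3 M). pose proof (zeta2_distribution 4 3 M).
  cbn [pow Nat.add] in *. weight7_relations (2 * M)%nat.
  unfold sigma34_approx, square_gap. lra.
Qed.

Ltac solve_limit :=
  repeat first
    [ apply lim_zeta1_double | apply lim_square_gap | apply lim_zeta2_doubling
    | apply is_lim_seq_const | apply is_lim_seq_minus' | apply is_lim_seq_plus'
    | apply is_lim_seq_mult' | ring | lia ].

Theorem mainTheorem20 :
  sigmaST 4 3 = 120 * lambdaS 7 - 96 * lambdaS 2 * lambdaS 5 /\
  sigmaST 3 4 = - 80 * lambdaS 7 + 8 * lambdaS 3 * lambdaS 4
              + 176 / 3 * lambdaS 2 * lambdaS 5.
Proof.
  split; apply sigmaST_of_lim.
  - apply (is_lim_seq_ext sigma43_approx); [intros M; symmetry; apply sigma43_partial_sum|].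
    eapply is_lim_seq_eq_value; [unfold sigma43_approx, Rdiv; solve_limit|].
    cbn [pow]. field.
  - apply (is_lim_seq_ext sigma34_approx); [intros M; symmetry; apply sigma34_partial_sum|].
    eapply is_lim_seq_eq_value; [unfold sigma34_approx, Rdiv; solve_limit|].
    cbn [pow]. field.
Qed.
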